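(* Consider the MAD-HTLC game described in the context, starting from the initial subgame $G(1,\mathrm{red})$. Suppose $\mathcal{A}$ does not know $pre_a$ and both $\mathcal{A}$ and $\mathcal{B}$ follow the prescribed strategies. Then the miners' best-response strategy leads to $\mathcal{B}$ redeeming both MH-Dep and MH-Col for $v^{\mathrm{dep}}+v^{\mathrm{col}}-f^{\mathrm{dc}}_{\mathcal{B}}$ tokens, and $\mathcal{A}$ gets no tokens.
   Context: Blockchain model: there are $n$ miners; miner $i$ has mining power $\lambda_i>0$ with $\sum_i\lambda_i=1$. The system proceeds in discrete rounds; in each round exactly one miner is chosen at random, miner $i$ with probability $\lambda_i$, and creates a block containing one transaction of her choice, receiving that transaction's fee. There is always an unrelated valid transaction available offering the base fee $f$. Publishing a transaction makes all its contents (in particular any preimages it contains) known to everyone. A contract can be redeemed by at most one confirmed transaction. Parties ($\mathcal{A}$, $\mathcal{B}$, miners) are rational and non-myopic, and their utility is the expected number of tokens they own at the end of the game. MAD-HTLC: $\mathcal{B}$ chose random preimages $pre_a,pre_b$ with digests $dig_a=H(pre_a)$, $dig_b=H(pre_b)$; only $\mathcal{B}$ knows $pre_b$; $\mathcal{A}$ knows $pre_a$ only if $\mathcal{B}$ shared it with her (and otherwise never). Two contracts are initiated in block $b_j$ with timeout $T$: MH-Dep holding $v^{\mathrm{dep}}$ tokens and MH-Col holding $v^{\mathrm{col}}$ tokens. MH-Dep can be redeemed via dep-A (signature of $\mathcal{A}$ and $pre_a$; any block), dep-B (signature of $\mathcal{B}$ and $pre_b$; only in a block at least $T$ blocks after initiation),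 or dep-M (both $pre_a$ and $pre_b$, no signature; any block). MH-Col can be redeemed only in a block at least $T$ blocks after initiation, via col-B (signature of $\mathcal{B}$) or col-M (both $pre_a$ and $pre_b$). The game: $T$ rounds creating blocks $b_{j+1},\dots,b_{j+T}$. Each round $\mathcal{A}$ and $\mathcal{B}$ first alternately publish transactions until neither wishes to publish more; then a randomly chosen miner creates the block. $\mathcal{A}$'s relevant transaction is $tx^{\mathrm{dep}}_{\mathcal{A}}$ (MH-Dep via dep-A, requires $pre_a$, fee $f<f^{\mathrm{dep}}_{\mathcal{A}}<v^{\mathrm{dep}}$). $\mathcal{B}$'s are $tx^{\mathrm{dep}}_{\mathcal{B}}$ (MH-Dep via dep-B, fee $f<f^{\mathrm{dep}}_{\mathcal{B}}<v^{\mathrm{dep}}$), $tx^{\mathrm{col}}_{\mathcal{B}}$ (MH-Col via col-B, fee $f<f^{\mathrm{col}}_{\mathcal{B}}<v^{\mathrm{col}}$) and $tx^{\mathrm{dc}}_{\mathcal{B}}$ (both contracts, fee $f<f^{\mathrm{dc}}_{\mathcal{B}}<v^{\mathrm{dep}}+v^{\mathrm{col}}$). A miner creating a block may include an unrelated transaction (fee $f$), any published transaction valid at that point ($tx^{\mathrm{dep}}_{\mathcal{A}}$ while MH-Dep is unredeemed; $tx^{\mathrm{col}}_{\mathcal{B}}$ only in the last round; $tx^{\mathrm{dep}}_{\mathcal{B}}$, $tx^{\mathrm{dc}}_{\mathcal{B}}$ only in the last round while MH-Dep is unredeemed), or, if both $pre_a$ and $pre_b$ were revealed by published transactions, her own transaction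 redeeming MH-Dep via dep-M (while unredeemed; reward $v^{\mathrm{dep}}$), MH-Col via col-M (last round; reward $v^{\mathrm{col}}$), or both (last round; reward $v^{\mathrm{dep}}+v^{\mathrm{col}}$). Subgame $G(k,s)$, $k\in[1,T]$, $s\in\{\mathrm{red},\mathrm{irred}\}$: the game starting just before round $k$ with MH-Dep redeemable or already redeemed; the full game is $G(1,\mathrm{red})$. Prescribed strategies: if $\mathcal{A}$ knows $pre_a$ she publishes $tx^{\mathrm{dep}}_{\mathcal{A}}$ within the first $T-1$ rounds; otherwise she publishes nothing. $\mathcal{B}$ waits until block $b_{j+T-1}$ is created; if $\mathcal{A}$ has not published $tx^{\mathrm{dep}}_{\mathcal{A}}$ he publishes $tx^{\mathrm{dc}}_{\mathcal{B}}$, otherwise he publishes $tx^{\mathrm{col}}_{\mathcal{B}}$. *)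

(* Model of the MAD-HTLC game (miners' subgame) with the
   prescribed strategies of A and B fixed. *)
From mathcomp Require Import all_boot all_order all_algebra.
Set Implicit Arguments. Unset Strict Implicit. Unset Printing Implicit Defensive.
Import Order.TTheory GRing.Theory Num.Theory.
Local Open Scope ring_scope.

Inductive tx := TxA_dep | TxB_dep | TxB_col | TxB_dc.

Inductive action :=
  | Unrel          (* unrelated transaction, base fee f *)
  | Incl of tx
  | MDep           (* miner's own tx redeeming MH-Dep via dep-M *)
  | MCol           (* miner's own tx redeeming MH-Col via col-M *)
  | MBoth.         (* miner's own tx redeeming both *)

Record params (R : realFieldType) := Params {
  f : R; vdep : R; vcol : R; fA_dep : R; fB_dep : R; fB_col : R; fB_dc : R }.

(* Set of published transactions (cumulative) just before the block of round k
   is created, under the prescribed strategies.  knowsA : whether A knows pre_a.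
   A (if she knows pre_a) publishes tx_A^dep in round 1 (i.e. within the first
   T-1 rounds, when T > 1); otherwise she publishes nothing.  B waits until
   block b_{j+T-1} is created and, in round T, publishes tx_B^dc if A has not
   published tx_A^dep, and tx_B^col otherwise. *)
Definition A_published (knowsA : bool) (T k : nat) : bool :=
  [&& knowsA, (1 < T)%N & (1 <= k)%N].

Definition published (knowsA : bool) (T k : nat) : tx -> bool := fun t =>
  match t with
  | TxA_dep => A_published knowsA T k
  | TxB_dep => false
  | TxB_col => (k == T) && A_published knowsA T k
  | TxB_dc  => (k == T) && ~~ A_published knowsA T k
  end.

(* Preimages revealed by published transactions. *)
Definition revealed_a (P : tx -> bool) : bool := P TxA_dep.
Definition revealed_b (P : tx -> bool) : bool := P TxB_dep || P TxB_dc.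

(* Validity of a miner's action in round k (1 <= k <= T), given published set
   P and red = true iff MH-Dep is still redeemable. *)
Definition valid (T k : nat) (P : tx -> bool) (red : bool) (a : action) : bool :=
  match a with
  | Unrel => true
  | Incl TxA_dep => P TxA_dep && red
  | Incl TxB_col => (k == T) && P TxB_col
  | Incl TxB_dep => [&& k == T, red & P TxB_dep]
  | Incl TxB_dc => [&& k == T, red & P TxB_dc]
  | MDep => [&& revealed_a P, revealed_b P & red]
  | MCol => [&& revealed_a P, revealed_b P & k == T]
  | MBoth => [&& revealed_a P, revealed_b P, k == T & red]
  end.

Definition redeems_dep (a : action) : bool :=
  match a with
  | Incl TxA_dep | Incl TxB_dep | Incl TxB_dc | MDep | MBoth => true
  | _ => false
  end.

Definition next (red : bool) (a : action) : bool := red && ~~ redeems_dep a.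

Section Payoffs.
Variables (R : realFieldType) (p : params R).

Definition miner_reward (a : action) : R :=
  match a with
  | Unrel => f p
  | Incl TxA_dep => fA_dep p
  | Incl TxB_dep => fB_dep p
  | Incl TxB_col => fB_col p
  | Incl TxB_dc => fB_dc p
  | MDep => vdep p
  | MCol => vcol p
  | MBoth => vdep p + vcol p
  end.

Definition A_reward (a : action) : R :=
  match a with Incl TxA_dep => vdep p - fA_dep p | _ => 0 end.

Definition B_reward (a : action) : R :=
  match a with
  | Incl TxB_dep => vdep p - fB_dep p
  | Incl TxB_col => vcol p - fB_col p
  | Incl TxB_dc => vdep p + vcol p - fB_dc p
  | _ => 0
  end.
End Payoffs.

(* Payoff functions of a party: g i a = tokens the party gets when miner i
   creates the block with action a. *)
Definition A_gain (R : realFieldType) (p : params R) {n : nat} : 'I_n -> action -> R := fun _ a => A_reward p a.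
Definition B_gain (R : realFieldType) (p : params R) {n : nat} : 'I_n -> action -> R := fun _ a => B_reward p a.
Definition miner_gain (R : realFieldType) (p : params R) n (j : 'I_n) : 'I_n -> action -> R :=
  fun i a => if i == j then miner_reward p a else 0.

(* Miner strategy profile: sigma i k red = action of miner i when she creates
   the block of round k, with MH-Dep redeemable iff red. *)
Definition profile n := 'I_n -> nat -> bool -> action.

(* Expected tokens of a party (payoff g) over the last m rounds of the game
   (rounds T-m+1 .. T), starting in state red.  cont ... T red is G(1, red). *)
Fixpoint cont (R : realFieldType) n (lam : 'I_n -> R) (T : nat) (sigma : profile n)
    (g : 'I_n -> action -> R) (m : nat) (red : bool) : R :=
  match m with
  | 0 => 0
  | m'.+1 =>
      \sum_(i < n) lam i *
        (g i (sigma i (T - m')%N red)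
         + cont lam T sigma g m' (next red (sigma i (T - m')%N red)))
  end.

Definition miners_best_response (R : realFieldType) (p : params R) n (lam : 'I_n -> R)
    (knowsA : bool) (T : nat) (sigma : profile n) : Prop :=
  forall (k : nat) (red : bool) (i : 'I_n), (1 <= k <= T)%N ->
    valid T k (published knowsA T k) red (sigma i k red) /\
    forall a : action, valid T k (published knowsA T k) red a ->
      miner_reward p a + cont lam T sigma (miner_gain p i) (T - k) (next red a)
      <= miner_reward p (sigma i k red)
         + cont lam T sigma (miner_gain p i) (T - k) (next red (sigma i k red)).

(** When A does not know pre_a it is never revealed, so the only valid miner
    actions are the unrelated transaction and, in the last round while MH-Dep
    is unredeemed, B's tx_B^dc. Best response thus forces every miner to idle
    before round T and to include tx_B^dc in round T, whose fee beats f with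
    nothing left to follow. B then collects both contracts with probability
    one, while A, who could only be paid through tx_A^dep, gets nothing. *)
From Pilot Require Import Defs.
From mathcomp Require Import all_boot all_order all_algebra.
From mathcomp Require Import zify.
Set Implicit Arguments. Unset Strict Implicit.
Import Order.TTheory GRing.Theory Num.Theory.
Local Open Scope ring_scope.

Section Continuation.
Variables (R : realFieldType) (n : nat) (lam : 'I_n -> R) (T : nat).
Variables (sigma : profile n) (g : 'I_n -> action -> R).

Lemma cont_step_uniform m red a c :
  \sum_(i < n) lam i = 1 ->
  (forall i, sigma i (T - m)%N red = a) -> (forall i, g i a = c) ->
  cont lam T sigma g m.+1 red = c + cont lam T sigma g m (Defs.next red a).
Proof.
move=> lam1 sigma_a g_a /=.
under eq_bigr => i _ do rewrite sigma_a g_a.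
by rewrite -big_distrl /= lam1 mul1r.
Qed.

Lemma cont_eq0 m red :
  (forall i k s, (1 <= k <= T)%N -> g i (sigma i k s) = 0) ->
  (m <= T)%N -> cont lam T sigma g m red = 0.
Proof.
move=> g0; elim: m red => [//|m IH] red mT /=.
rewrite big1 // => i _.
by rewrite g0 ?IH ?addr0 ?mulr0 //; lia.
Qed.

End Continuation.

Lemma valid_uninformedA T k red a :
  valid T k (published false T k) red a ->
  a = Unrel \/ [/\ a = Incl TxB_dc, k = T & red].
Proof.
case: a => [|[]|||] //=; try by left.
- by rewrite !andbF.
- by rewrite !andbF.
- by case/and4P => /eqP -> -> _ _; right.
Qed.

Lemma A_reward_uninformedA (R : realFieldType) (p : params R) T k red a :
  valid T k (published false T k) red a -> A_reward p a = 0.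
Proof. by case/valid_uninformedA => [|[]] ->. Qed.

Section BestResponse.
Variables (R : realFieldType) (n : nat) (lam : 'I_n -> R) (p : params R).
Variables (T : nat) (sigma : profile n).
Hypothesis best_response : miners_best_response p lam false T sigma.

Lemma best_response_idle i k red : (1 <= k < T)%N -> sigma i k red = Unrel.
Proof.
move=> kT; have k_range : (1 <= k <= T)%N by lia.
have [valid_sigma _] := best_response red i k_range.
case/valid_uninformedA: valid_sigma => [//|[_ kE _]].
by rewrite kE ltnn andbF in kT.
Qed.

Lemma best_response_last_round i :
  f p < fB_dc p -> (0 < T)%N -> sigma i T true = Incl TxB_dc.
Proof.
move=> f_lt_dc T_gt0.
have T_range : (1 <= T <= T)%N by rewrite T_gt0 leqnn.
have [valid_sigma opt] := best_response true i T_range.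
have := opt (Incl TxB_dc); rewrite /= eqxx subnn /= !addr0 => /(_ isT).
case/valid_uninformedA: valid_sigma => [->|[-> _ _]] // dc_le_f.
by have := lt_le_trans f_lt_dc dc_le_f; rewrite ltxx.
Qed.

Lemma cont_A_gain_uninformedA m red :
  (m <= T)%N -> cont lam T sigma (A_gain p) m red = 0.
Proof.
apply: cont_eq0 => i k s kT.
exact: A_reward_uninformedA (proj1 (best_response s i kT)).
Qed.

Lemma cont_B_gain_uninformedA m :
  \sum_(i < n) lam i = 1 -> f p < fB_dc p -> (0 < m <= T)%N ->
  cont lam T sigma (B_gain p) m true = vdep p + vcol p - fB_dc p.
Proof.
move=> lam1 f_lt_dc; elim: m => [//|[|m] IH] /andP [_ mT].
  have sigma_dc i : sigma i (T - 0)%N true = Incl TxB_dc.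
    by rewrite subn0 best_response_last_round.
  by rewrite (cont_step_uniform (g := B_gain p) lam1 sigma_dc (fun=> erefl)) addr0.
have sigma_idle i : sigma i (T - m.+1)%N true = Unrel.
  by rewrite best_response_idle //; lia.
rewrite (cont_step_uniform (g := B_gain p) lam1 sigma_idle (fun=> erefl)) add0r IH //.
exact: ltnW mT.
Qed.

End BestResponse.

Theorem lemma3 (R : realFieldType) (n : nat) (lam : 'I_n -> R) (p : params R)
    (T : nat) (sigma : profile n) :
  (forall i, 0 < lam i) -> \sum_(i < n) lam i = 1 ->
  f p < fA_dep p < vdep p ->
  f p < fB_dep p < vdep p ->
  f p < fB_col p < vcol p ->
  f p < fB_dc p < vdep p + vcol p ->
  (0 < T)%N ->
  miners_best_response p lam false T sigma ->
  (forall i, sigma i T true = Incl TxB_dc) /\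
  cont lam T sigma (B_gain p) T true = vdep p + vcol p - fB_dc p /\
  cont lam T sigma (A_gain p) T true = 0.
Proof.
move=> _ lam1 _ _ _ /andP [f_lt_dc _] T_gt0 best_response.
have T_range : (0 < T <= T)%N by rewrite T_gt0 leqnn.
split; [|split].
- by move=> i; exact: best_response_last_round best_response i f_lt_dc T_gt0.
- exact (cont_B_gain_uninformedA best_response lam1 f_lt_dc T_range).
- exact (cont_A_gain_uninformedA best_response true (leqnn T)).
Qed.
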